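(* Let $R$, $G$, $*$, $\sigma$ and $\mathcal{S}$ be as in the context. If $\mathcal{S}$ is anticommutative, then $c_x=x^*x^{-1}$ lies in the center $\mathcal{Z}(G)$ of $G$ for every $x\in G$.
   Context: Throughout, $R$ is a commutative ring with unity with $\operatorname{char}(R)\neq 2$, and $\mathcal{U}(R)$ is its unit group. $G$ is a group with an involution $*$, i.e. a map $x\mapsto x^*$ with $(xy)^*=y^*x^*$ and $(x^* )^*=x$. The map $\sigma:G\to\mathcal{U}(R)$ is a nontrivial group homomorphism with kernel $N=\ker\sigma$, and it is compatible with $*$: $xx^*\in N$ for all $x\in G$. The group ring $RG$ carries the involution $\left(\sum_{x\in G}\alpha_x x\right)^{\sigma*}=\sum_{x\in G}\sigma(x)\alpha_x x^*$. Write $G_*=\{x\in G: x^*=x\}$ and $N_*=G_*\cap N$. Let $\mathcal{S}$ be the $R$-submodule of $RG$ spanned by the union of the following three sets: - $2\mathcal{S}_1=\{2x: x\in N_*\}$; - $\mathcal{S}_2=\{\alpha x: x\in G_*\setminus N,\ \alpha\in R,\ \alpha(1-\sigma(x))=0\}$; - $\mathcal{S}_3=\{x+\sigma(x)x^*: x\in G\setminus G_*\}$. $\mathcal{S}$ is called anticommutative if $ab+ba=0$ for all $a,b\in\mathcal{S}$. *)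

From HB Require Import structures.
From mathcomp Require Import all_boot all_order all_algebra.
Set Implicit Arguments. Unset Strict Implicit. Unset Printing Implicit Defensive.
Import GRing.Theory.

Local Open Scope ring_scope.

Section GroupRing.
Variables (R : comNzRingType) (G : groupType).

(* Elements of the group ring RG are represented by finite formal sums
   sum_i r_i g_i, i.e. lists of pairs (r_i, g_i); two lists represent the same
   element of RG iff they have the same coefficient function [coef]. *)
Definition RG := seq (R * G).

Definition coef (a : RG) (g : G) : R := \sum_(p <- a | p.2 == g) p.1.

Definition addRG (a b : RG) : RG := a ++ b.
Definition scaleRG (r : R) (a : RG) : RG := [seq (r * p.1, p.2) | p <- a].
Definition mulRG (a b : RG) : RG :=
  [seq (p.1 * q.1, (p.2 * q.2)%g) | p <- a, q <- b].

Definition zeroRG (a : RG) : Prop := forall g : G, coef a g = 0.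

Variables (sigma : G -> R) (st : G -> G).

(* 2 S_1 = { 2x : x in N_* },  N = ker sigma, G_* = fixed points of st *)
Definition gen1 (a : RG) : Prop :=
  exists x : G, st x = x /\ sigma x = 1 /\ a = [:: (2%:R, x)].
Definition gen2 (a : RG) : Prop :=
  exists (x : G) (alpha : R),
    st x = x /\ sigma x != 1 /\ alpha * (1 - sigma x) = 0 /\ a = [:: (alpha, x)].
Definition gen3 (a : RG) : Prop :=
  exists x : G, st x != x /\ a = [:: (1, x); (sigma x, st x)].

Definition genS (a : RG) : Prop := gen1 a \/ gen2 a \/ gen3 a.

Inductive inS : RG -> Prop :=
  | inS_nil : inS [::]
  | inS_cons (r : R) (g a : RG) : genS g -> inS a -> inS (addRG (scaleRG r g) a).

Definition anticommS : Prop :=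
  forall a b : RG, inS a -> inS b -> zeroRG (addRG (mulRG a b) (mulRG b a)).

End GroupRing.

From HB Require Import structures.
From mathcomp Require Import all_boot all_order all_algebra.
From mathcomp Require Import ring.
Set Implicit Arguments. Unset Strict Implicit. Unset Printing Implicit Defensive.
Import GRing.Theory.
Local Open Scope ring_scope.

(* Write X = x^* and Y = y^*.  If X <> x, then a = x + sigma(x) X lies in S
   and a^2 = 0; comparing coefficients gives x X = X x, X X = x x and 4 = 0,
   so c = X x^-1 commutes with x and X and also equals x X^-1.  For another
   element y, take b = y + sigma(y) Y (or b = 2z for a fixed z): every
   product in ab must cancel against one in ba, and each consistent matching
   either lets y permute {x, X} by conjugation, or identifies c with Y y^-1
   or y Y^-1, or makes xy or yx a fixed element of sigma-value -1, to which
   the fixed case applies.  A fixed y is handled through xy and X y. *)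

Section Twist.
Variable G : groupType.
Local Open Scope group_scope.
Implicit Types a b c x X y Y : G.

Lemma eqg_mul2l c a b : (c * a == c * b) = (a == b).
Proof. by apply/eqP/eqP => [/mulgI|->]. Qed.

Lemma eqg_mul2r c a b : (a * c == b * c) = (a == b).
Proof. by apply/eqP/eqP => [/mulIg|->]. Qed.

Lemma commute_cancel_l c a b : commute c a -> commute c (a * b) -> commute c b.
Proof. by move=> ca cab; rewrite -(mulKg a b); apply/commuteM/cab/commuteV. Qed.

Lemma commute_cancel_r c a b : commute c a -> commute c (b * a) -> commute c b.
Proof. by move=> ca cba; rewrite -(mulgK a b); apply/commuteM/commuteV. Qed.

Lemma twist_commute_conj x X y Y :
  x * Y = y * x -> X * Y = y * X -> commute (X * x^-1) y.
Proof.
move=> xY XY; apply: (mulIg x).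
by rewrite -mulgA -xY mulgA mulgVK XY -mulgA mulgVK.
Qed.

Lemma twistE_conj x X y Y :
  x * y = y * X -> X * y = Y * X -> X * x^-1 = Y * y^-1.
Proof.
move=> xy Xy; have -> : Y = X * y * X^-1 by rewrite Xy mulgK.
have XVyV : X^-1 * y^-1 = y^-1 * x^-1 by rewrite -invgM -xy invgM.
by rewrite -!mulgA XVyV mulVKg.
Qed.

Section Involution.
Variables x X : G.
Hypotheses (cxX : commute x X) (sqX : X * X = x * x).

Lemma twist_commutel : commute (X * x^-1) x.
Proof. exact/commute_sym/commuteM/commuteV/commute_refl. Qed.

Lemma twist_commuter : commute (X * x^-1) X.
Proof. exact/commute_sym/commuteM/commuteV/commute_sym/cxX/commute_refl. Qed.

Lemma twistC : X * x^-1 = x * X^-1.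
Proof. by apply: (mulIg X); rewrite twist_commuter mulgA sqX mulgK mulgVK. Qed.

Lemma twistE_mul y Y : X * Y = x * y -> X * x^-1 = y * Y^-1.
Proof.
move=> XY; rewrite (commuteV (commute_sym cxX)).
by apply: (mulgI x); rewrite mulVKg; apply: (mulIg Y); rewrite XY -mulgA mulgVK.
Qed.

Lemma twist_commute_swap y : x * y = y * X -> X * y = y * x -> commute (X * x^-1) y.
Proof.
move=> xy Xy; have xVy : x^-1 * y = y * X^-1.
  by apply: (mulgI x); rewrite mulVKg mulgA xy mulgK.
by rewrite /commute -mulgA xVy mulgA Xy -mulgA -twistC.
Qed.

End Involution.
End Twist.

Section Coefficients.
Variables (R : comNzRingType) (G : groupType).
Implicit Types (a b : RG R G) (g h : G) (r s : R).

Lemma coef_nil g : coef ([::] : RG R G) g = 0.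
Proof. by rewrite /coef big_nil. Qed.

Lemma coef_cons r h a g :
  coef ((r, h) :: a) g = (if h == g then r else 0) + coef a g.
Proof. by rewrite /coef big_cons /=; case: eqP; rewrite ?add0r. Qed.

Lemma coef_cat a b g : coef (a ++ b) g = coef a g + coef b g.
Proof. by rewrite /coef big_cat. Qed.

Lemma coef_notin a g : g \notin map snd a -> coef a g = 0.
Proof.
elim: a => [|[r h] a IH] /=; first by rewrite coef_nil.
by rewrite inE negb_or coef_cons eq_sym => /andP[/negbTE-> /IH->]; rewrite addr0.
Qed.

Lemma coef_uniq a r g : uniq (map snd a) -> (r, g) \in a -> coef a g = r.
Proof.
elim: a => [//|[s h] a IH] /= /andP[ha ua]; rewrite inE coef_cons.
case/orP=> [/eqP[-> ->]|ra]; first by rewrite eqxx coef_notin ?addr0.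
have gh : h != g by apply: contraNneq ha => ->; exact: (map_f snd ra).
by rewrite (negbTE gh) add0r IH.
Qed.

Lemma coef_cancel a b r g : zeroRG (a ++ b) ->
  uniq (map snd a) -> uniq (map snd b) -> (r, g) \in a -> r != 0 ->
  exists2 s, (s, g) \in b & r + s = 0.
Proof.
move=> ab0 ua ub ra r0; have := ab0 g; rewrite coef_cat (coef_uniq ua ra).
have [/mapP[[s h] sb /= ->]|gb] := boolP (g \in map snd b).
  by rewrite (coef_uniq ub sb); exists s.
by rewrite coef_notin // addr0 => r0'; rewrite r0' eqxx in r0.
Qed.

Lemma coef_cancel2 a r g s1 s2 h1 h2 :
  zeroRG (a ++ [:: (s1, h1); (s2, h2)]) -> uniq (map snd a) -> h1 != h2 ->
  (r, g) \in a -> r != 0 -> g = h1 /\ r + s1 = 0 \/ g = h2 /\ r + s2 = 0.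
Proof.
move=> ab0 ua h12 ra r0; have uh : uniq [:: h1; h2] by rewrite /= inE h12.
have [s] := coef_cancel ab0 ua uh ra r0.
by rewrite !inE !xpair_eqE => /orP[]/andP[/eqP-> /eqP->] rs; [left | right].
Qed.

Lemma coef_cancel4 a r g s1 s2 s3 s4 h1 h2 h3 h4 :
  zeroRG (a ++ [:: (s1, h1); (s2, h2); (s3, h3); (s4, h4)]) ->
  uniq (map snd a) -> uniq [:: h1; h2; h3; h4] -> (r, g) \in a -> r != 0 ->
  [\/ g = h1 /\ r + s1 = 0, g = h2 /\ r + s2 = 0, g = h3 /\ r + s3 = 0
     | g = h4 /\ r + s4 = 0].
Proof.
move=> ab0 ua uh ra r0; have [s] := coef_cancel ab0 ua uh ra r0.
by rewrite !inE !xpair_eqE => /or4P[]/andP[/eqP-> /eqP->] rs; constructor.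
Qed.

End Coefficients.

Section Anticommutation.
Variables (R : comNzRingType) (G : groupType) (st : G -> G) (sigma : G -> R).
Hypotheses (hchar : (2%:R : R) != 0)
           (sigma_unit : forall x : G, exists y : R, sigma x * y = 1)
           (hS : anticommS sigma st).

Definition sum_conj (x : G) : RG R G := [:: (1, x); (sigma x, st x)].

Lemma inS_gen a : genS sigma st a -> inS sigma st a.
Proof.
move=> ga; have := inS_cons 1 ga (inS_nil sigma st).
have -> : scaleRG 1 a = a.
  by rewrite /scaleRG -[RHS]map_id; apply: eq_map => -[r g] /=; rewrite mul1r.
by rewrite /addRG cats0.
Qed.

Lemma inS_sum_conj x : st x != x -> inS sigma st (sum_conj x).
Proof. by move=> hx; apply: inS_gen; right; right; exists x. Qed.

Lemma inS_two_fixed z : st z = z -> 2%:R * (1 - sigma z) = 0 ->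
  inS sigma st [:: (2%:R, z)].
Proof.
move=> hz h2; apply: inS_gen; have [hs|hs] := eqVneq (sigma z) 1.
  by left; exists z.
by right; left; exists z, 2%:R.
Qed.

Lemma mulr_sigma_eq0 r g : (r * sigma g == 0) = (r == 0).
Proof.
have [w hw] := sigma_unit g; apply/eqP/eqP => [r0|->]; last by rewrite mul0r.
by rewrite -[r]mulr1 -hw mulrA r0 mul0r.
Qed.

Lemma sigma_neq0 g : sigma g != 0.
Proof. by rewrite -[sigma g]mul1r mulr_sigma_eq0 oner_neq0. Qed.

Lemma two_sigma_neq0 g : 2%:R * sigma g != 0.
Proof. by rewrite mulr_sigma_eq0. Qed.

Lemma double_sigma_neq0 g : sigma g + sigma g != 0.
Proof. by rewrite -mulr2n -mulr_natl two_sigma_neq0. Qed.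

Local Open Scope group_scope.

Lemma sum_conj_sq x : st x != x ->
  [/\ commute x (st x), st x * st x = x * x & (4%:R : R) = 0].
Proof.
move=> hx; have := hS (inS_sum_conj hx) (inS_sum_conj hx).
rewrite /zeroRG /addRG /= => aa0.
have xX : (x == st x) = false by rewrite eq_sym (negbTE hx).
have sqX : st x * st x = x * x.
  have := aa0 (x * x).
  rewrite !coef_cons coef_nil !eqxx ?eqg_mul2l ?eqg_mul2r ?xX ?(negbTE hx) /=.
  by case: eqP => // _ c0; exfalso; move/eqP: hchar; apply; rewrite -c0; ring.
have := aa0 (x * st x).
rewrite !coef_cons coef_nil !eqxx ?eqg_mul2l ?eqg_mul2r ?xX ?(negbTE hx) /=.
case: eqP => [Xx c0|_ c0]; last first.
  by exfalso; move/eqP: (two_sigma_neq0 x); apply; rewrite -c0; ring.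
split=> //; apply/eqP; rewrite -(mulr_sigma_eq0 _ x) -c0; apply/eqP; ring.
Qed.

Lemma twist_commute_fixed x z : st x != x -> st z = z ->
  (2%:R * (1 - sigma z))%R = 0 -> commute (st x * x^-1) z.
Proof.
move=> hx hz h2; have [cxX sqX _] := sum_conj_sq hx.
pose a := [:: (2%:R, x * z); ((sigma x * 2%:R)%R, st x * z)].
have xz0 : zeroRG (a ++ [:: (2%:R, z * x); ((2%:R * sigma x)%R, z * st x)]).
  have := hS (inS_sum_conj hx) (inS_two_fixed hz h2).
  by rewrite /addRG /mulRG /= !mul1r !mulr1.
have ua : uniq (map snd a) by rewrite /= inE eqg_mul2r eq_sym hx.
have zxX : z * x != z * st x by rewrite eqg_mul2l eq_sym.
have Xz0 : (sigma x * 2%:R)%R != 0 by rewrite mulrC two_sigma_neq0.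
have Xza : ((sigma x * 2%:R)%R, st x * z) \in a by rewrite !inE eqxx orbT.
have [[xz _]|[xz _]] := coef_cancel2 (a := a) xz0 ua zxX (mem_head _ _) hchar;
have [[Xz _]|[Xz _]] := coef_cancel2 (a := a) xz0 ua zxX Xza Xz0.
- by move: hx; rewrite -(eqg_mul2r z) Xz xz eqxx.
- by apply/commute_sym/commuteM; [exact/esym | exact/commuteV/esym].
- exact: twist_commute_swap.
- by move: hx; rewrite -(eqg_mul2r z) Xz xz eqxx.
Qed.

Hypotheses (st_mul : forall x y : G, st (x * y) = st y * st x)
           (st_invol : forall x : G, st (st x) = x)
           (sigma_mul : forall x y : G, sigma (x * y) = (sigma x * sigma y)%R).

Section NonFixed.
Variables x y : G.
Hypotheses (hx : st x != x) (hy : st y != y).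
Local Notation X := (st x).
Local Notation Y := (st y).

Let facts_x := sum_conj_sq hx.
Let facts_y := sum_conj_sq hy.

Lemma twist_commute_fixed_opp z : st z = z -> (1 + sigma z)%R = 0 ->
  commute (X * x^-1) z.
Proof.
move=> hz s1; apply: twist_commute_fixed => //; have [_ _ four0] := facts_x.
have -> : (2%:R * (1 - sigma z) = 4%:R - 2%:R * (1 + sigma z))%R by ring.
by rewrite s1 four0 mulr0 subr0.
Qed.

Let ab := [:: (1%R, x * y); (sigma y, x * Y); (sigma x, X * y);
              ((sigma x * sigma y)%R, X * Y)].

Lemma anticomm_xy :
  zeroRG (ab ++ [:: (1%R, y * x); (sigma x, y * X);
                    (sigma y, Y * x); ((sigma y * sigma x)%R, Y * X)]).
Proof.
have := hS (inS_sum_conj hx) (inS_sum_conj hy).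
by rewrite /addRG /mulRG /= !mul1r !mulr1.
Qed.

Section Generic.
(* When X Y = x y or x Y = X y, [twistE_mul] identifies X x^-1 with y Y^-1;
   otherwise the four products in ab (and those in ba) are pairwise distinct. *)
Hypotheses (ncol : X * Y != x * y) (nskew : x * Y != X * y).

Lemma ab_cancel r g : (r, g) \in ab -> r != 0 ->
  [\/ g = y * x /\ (r + 1)%R = 0, g = y * X /\ (r + sigma x)%R = 0,
      g = Y * x /\ (r + sigma y)%R = 0 | g = Y * X /\ (r + sigma y * sigma x)%R = 0].
Proof.
have xX : (x == X) = false by rewrite eq_sym (negbTE hx).
have yY : (y == Y) = false by rewrite eq_sym (negbTE hy).
have st_eq a b : (st a == st b) = (a == b) := inj_eq (can_inj st_invol) a b.
have yxYX : (y * x == Y * X) = false.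
  by rewrite -st_eq !st_mul !st_invol (negbTE ncol).
have yXYx : (y * X == Y * x) = false.
  by rewrite -st_eq !st_mul !st_invol (negbTE nskew).
apply: coef_cancel4 anticomm_xy _ _.
  by rewrite /= !inE !eqg_mul2l !eqg_mul2r xX yY eq_sym (negbTE ncol) (negbTE nskew).
by rewrite /= !inE !eqg_mul2l !eqg_mul2r xX yY yxYX yXYx.
Qed.

Lemma commute_or_XY : [\/ commute (X * x^-1) y, X * Y = y * X | X * Y = Y * x].
Proof.
have [cxX _ _] := facts_x.
have sxy0 : (sigma x * sigma y)%R != 0 by rewrite -sigma_mul sigma_neq0.
have XYab : ((sigma x * sigma y)%R, X * Y) \in ab by rewrite !inE eqxx !orbT.
have [[XY c]|[XY _]|[XY _]|[XY c]] := ab_cancel XYab sxy0.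
- constructor 1; apply: (commute_cancel_r (twist_commutel cxX)).
  apply: twist_commute_fixed_opp; first by rewrite st_mul XY.
  by rewrite sigma_mul addrC mulrC.
- by constructor 2.
- by constructor 3.
- by move: (double_sigma_neq0 (x * y)); rewrite sigma_mul {2}mulrC c eqxx.
Qed.

Lemma twist_commute_yX : x * y = y * X -> commute (X * x^-1) y.
Proof.
move=> xy; have [cxX sqX _] := facts_x; have [cyY _ _] := facts_y.
have Xyab : (sigma x, X * y) \in ab by rewrite !inE eqxx !orbT.
have [[Xy _]|[Xy _]|[Xy _]|[Xy _]] := ab_cancel Xyab (sigma_neq0 x).
- exact: twist_commute_swap.
- by move: hx; rewrite -(eqg_mul2r y) Xy xy eqxx.
- have [//|XY|XY] := commute_or_XY.
    by move: ncol; rewrite XY xy eqxx.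
  by move: hy; rewrite -(eqg_mul2l X) XY Xy eqxx.
- by rewrite (twistE_conj xy Xy); apply: twist_commutel.
Qed.

Lemma twist_commute_Yx : x * y = Y * x -> commute (X * x^-1) y.
Proof.
move=> xy; have [cxX sqX _] := facts_x; have [cyY _ _] := facts_y.
have Xyab : (sigma x, X * y) \in ab by rewrite !inE eqxx !orbT.
have [[Xy _]|[Xy c]|[Xy _]|[Xy _]] := ab_cancel Xyab (sigma_neq0 x).
- by rewrite (twistC cxX sqX) (twistE_conj Xy xy); apply: twist_commutel.
- by move: (double_sigma_neq0 x); rewrite c eqxx.
- by move: hx; rewrite -(eqg_mul2r y) Xy xy eqxx.
- have [//|XY|XY] := commute_or_XY; last by move: ncol; rewrite XY xy eqxx.
  have xYab : (sigma y, x * Y) \in ab by rewrite !inE eqxx !orbT.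
  have [[xY _]|[xY _]|[xY c]|[xY _]] := ab_cancel xYab (sigma_neq0 y).
  + exact: twist_commute_conj xY XY.
  + by move: hx; rewrite eq_sym -(eqg_mul2r Y) xY XY eqxx.
  + by move: (double_sigma_neq0 y); rewrite c eqxx.
  + by move: nskew; rewrite xY Xy eqxx.
Qed.

Lemma twist_commute_generic : commute (X * x^-1) y.
Proof.
have [[xy c]|[xy _]|[xy _]|[xy c]] := ab_cancel (mem_head _ _) (oner_neq0 R).
- by move: hchar; rewrite -[2%:R]/(1 + 1)%R c eqxx.
- exact: twist_commute_yX.
- exact: twist_commute_Yx.
- have [cxX _ _] := facts_x; apply: (commute_cancel_l (twist_commutel cxX)).
  apply: twist_commute_fixed_opp; first by rewrite st_mul -xy.
  by rewrite sigma_mul mulrC.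
Qed.

End Generic.

Lemma twist_commute_nonfixed : commute (X * x^-1) y.
Proof.
have [cxX sqX _] := facts_x; have [cyY _ _] := facts_y.
have cyyY : commute y (y * Y^-1) := commuteM (commute_refl y) (commuteV cyY).
have [XY|ncol] := eqVneq (X * Y) (x * y).
  by rewrite (twistE_mul cxX XY); apply: commute_sym.
have [xY|nskew] := eqVneq (x * Y) (X * y).
  by rewrite (twistC cxX sqX) (twistE_mul (commute_sym cxX) xY); apply: commute_sym.
exact: twist_commute_generic.
Qed.

End NonFixed.
End Anticommutation.

Theorem lemma3p11 (R : comNzRingType) (G : groupType)
  (st : G -> G) (sigma : G -> R)
  (hchar : (2%:R : R) != 0)
  (st_mul : forall x y : G, st (x * y)%g = (st y * st x)%g)
  (st_invol : forall x : G, st (st x) = x)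
  (sigma_unit : forall x : G, exists y : R, sigma x * y = 1)
  (sigma_mul : forall x y : G, sigma (x * y)%g = sigma x * sigma y)
  (sigma_nontriv : exists x : G, sigma x != 1)
  (sigma_compat : forall x : G, sigma (x * st x)%g = 1)
  (hS : anticommS sigma st) :
  forall x y : G, ((st x * x^-1) * y)%g = (y * (st x * x^-1))%g.
Proof.
move=> x y; have [->|hx] := eqVneq (st x) x; first by rewrite mulgV mul1g mulg1.
have nonfixed := twist_commute_nonfixed hchar sigma_unit hS st_mul st_invol sigma_mul hx.
have [hy|hy] := eqVneq (st y) y; last exact: nonfixed.
have [cxX sqX _] := sum_conj_sq hchar sigma_unit hS hx.
have [xy|nxy] := eqVneq (st (x * y)%g) (x * y)%g; last first.
  exact: commute_cancel_l (twist_commutel cxX) (nonfixed _ nxy).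
have [Xy|nXy] := eqVneq (st (st x * y)%g) (st x * y)%g; last first.
  exact: commute_cancel_l (twist_commuter cxX) (nonfixed _ nXy).
apply: (twist_commute_swap cxX sqX).
  by rewrite -xy st_mul hy.
by rewrite -Xy st_mul hy st_invol.
Qed.
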